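(* Let $\mu\in(0,1/2]$. For every $c<c_J$, both $R^E_{\text{ext}}(c)<2$ and $R^M_{\text{ext}}(c)<2$.
   Context: $c_J=-1-2\sqrt{\mu(1-\mu)}$. $K(k)=\int_0^{\pi/2}(1-k^2\sin^2\theta)^{-1/2}d\theta$ is the complete elliptic integral of the first kind. $R^E_{\text{ext}}(c)=\frac{\pi}{2}\frac{1}{\sqrt{1-2k_E^2}K(k_E)}$ with $k_E^2=\frac12\big(1-\frac{1-2\mu-c}{\sqrt{c^2-2(1-2\mu)c+1}}\big)$, and $R^M_{\text{ext}}(c)=\frac{\pi}{2}\frac{1}{\sqrt{1-2k_M^2}K(k_M)}$ with $k_M^2=\frac12\big(1+\frac{c+1-2\mu}{\sqrt{c^2+2(1-2\mu)c+1}}\big)$; these are the rotation numbers of the exterior collision orbits of the Euler problem (mass ratio $\mu$) near the Earth and near the Moon. *)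

From Stdlib Require Import Reals ClassicalEpsilon.
Open Scope R_scope.

Definition K_integrand (k : R) (theta : R) : R :=
  / sqrt (1 - k ^ 2 * (sin theta) ^ 2).

(* K(k) = int_0^{pi/2} (1 - k^2 sin^2 theta)^(-1/2) dtheta, as the Riemann
   integral (chosen via epsilon; the Riemann integral does not depend on the
   integrability proof, and for k^2 < 1 the integrand is continuous). *)
Definition ellipticK (k : R) : R :=
  epsilon (inhabits 0)
    (fun I => exists pr : Riemann_integrable (K_integrand k) 0 (PI / 2),
                RiemannInt pr = I).

Definition cJ (mu : R) : R := -1 - 2 * sqrt (mu * (1 - mu)).

Definition kE2 (mu c : R) : R :=
  / 2 * (1 - (1 - 2 * mu - c) / sqrt (c ^ 2 - 2 * (1 - 2 * mu) * c + 1)).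

Definition kM2 (mu c : R) : R :=
  / 2 * (1 + (c + 1 - 2 * mu) / sqrt (c ^ 2 + 2 * (1 - 2 * mu) * c + 1)).

Definition RE_ext (mu c : R) : R :=
  PI / 2 * / (sqrt (1 - 2 * kE2 mu c) * ellipticK (sqrt (kE2 mu c))).

Definition RM_ext (mu c : R) : R :=
  PI / 2 * / (sqrt (1 - 2 * kM2 mu c) * ellipticK (sqrt (kM2 mu c))).

(* Since the integrand of [K] is at least 1, [K(k) >= pi/2], so the rotation
   number is at most [1 / sqrt (1 - 2 k^2)] and it suffices that
   [1 - 2 k^2 > 1/4].  Both moduli have the shape
   [k^2 = (1 - x / sqrt (x^2 + b)) / 2] with [b = 4 mu (1 - mu)], where
   [x = 1 - 2 mu - c] near the Earth and [x = 2 mu - 1 - c] near the Moon;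
   then [1 - 2 k^2 = x / sqrt (x^2 + b)], which exceeds [1/4] exactly when
   [b < 15 x^2], and below [c_J] both choices of [x] satisfy [b < x^2]. *)
From Stdlib Require Import Reals Lra ClassicalEpsilon.
Open Scope R_scope.

Definition rotation_number (k2 : R) : R :=
  PI / 2 * / (sqrt (1 - 2 * k2) * ellipticK (sqrt k2)).

Lemma sin_pow2_bounds (x : R) : 0 <= sin x ^ 2 <= 1.
Proof.
  pose proof (sin2_cos2 x). unfold Rsqr in *.
  assert (0 <= cos x ^ 2) by apply pow2_ge_0.
  split; [apply pow2_ge_0 | simpl in *; lra].
Qed.

Lemma K_radicand_bounds (k x : R) :
  k ^ 2 < 1 -> 0 < 1 - k ^ 2 * sin x ^ 2 <= 1.
Proof.
  intros hk. pose proof (sin_pow2_bounds x). pose proof (pow2_ge_0 k).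
  split; nra.
Qed.

Lemma K_integrand_ge_1 (k x : R) : k ^ 2 < 1 -> 1 <= K_integrand k x.
Proof.
  intros hk. unfold K_integrand.
  destruct (K_radicand_bounds k x hk) as [hpos hle1].
  assert (hsqrt_pos : 0 < sqrt (1 - k ^ 2 * sin x ^ 2)) by now apply sqrt_lt_R0.
  assert (hsqrt_le1 : sqrt (1 - k ^ 2 * sin x ^ 2) <= 1).
  { rewrite <- sqrt_1 at 2. now apply sqrt_le_1_alt. }
  rewrite <- Rinv_1 at 1. apply Rinv_le_contravar; assumption.
Qed.

Lemma K_integrand_continuous (k : R) : k ^ 2 < 1 -> continuity (K_integrand k).
Proof.
  intros hk x. unfold K_integrand.
  destruct (K_radicand_bounds k x hk) as [hpos _].
  change (fun theta => / sqrt (1 - k ^ 2 * sin theta ^ 2)) with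
    (inv_fct (comp sqrt (fun theta => 1 - k ^ 2 * sin theta ^ 2))).
  apply continuity_pt_inv.
  - apply continuity_pt_comp; [reg | now apply continuity_pt_sqrt; lra].
  - unfold comp. pose proof (sqrt_lt_R0 _ hpos). lra.
Qed.

Lemma ellipticK_RiemannInt (k : R)
  (pr : Riemann_integrable (K_integrand k) 0 (PI / 2)) :
  ellipticK k = RiemannInt pr.
Proof.
  unfold ellipticK.
  destruct (epsilon_spec (inhabits 0)
    (fun I => exists pr : Riemann_integrable (K_integrand k) 0 (PI / 2),
                RiemannInt pr = I) (ex_intro _ _ (ex_intro _ pr eq_refl)))
    as [pr' <-].
  apply RiemannInt_P5.
Qed.

Lemma ellipticK_ge_half_PI (k : R) : k ^ 2 < 1 -> PI / 2 <= ellipticK k.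
Proof.
  intros hk. pose proof PI_RGT_0.
  assert (pr : Riemann_integrable (K_integrand k) 0 (PI / 2)).
  { apply continuity_implies_RiemannInt; [lra |].
    intros x _. now apply K_integrand_continuous. }
  rewrite (ellipticK_RiemannInt k pr).
  pose proof (RiemannInt_P19 (RiemannInt_P14 0 (PI / 2) 1) pr) as hmono.
  rewrite RiemannInt_P15 in hmono. unfold fct_cte in hmono.
  assert (1 * (PI / 2 - 0) <= RiemannInt pr).
  { apply hmono; [lra |]. intros x _. now apply K_integrand_ge_1. }
  lra.
Qed.

Lemma rotation_number_lt_2 (k2 : R) :
  0 <= k2 -> / 4 < 1 - 2 * k2 -> rotation_number k2 < 2.
Proof.
  intros hk2 hquarter. unfold rotation_number. pose proof PI_RGT_0.
  assert (hK : PI / 2 <= ellipticK (sqrt k2)).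
  { apply ellipticK_ge_half_PI. rewrite pow2_sqrt; lra. }
  assert (hsqrt : / 2 < sqrt (1 - 2 * k2)).
  { rewrite <- (sqrt_pow2 (/ 2)) by lra. apply sqrt_lt_1_alt. simpl; lra. }
  assert (hden : 0 < sqrt (1 - 2 * k2) * ellipticK (sqrt k2)) by nra.
  apply (Rmult_lt_reg_r _ _ _ hden).
  rewrite Rmult_assoc, Rinv_l by lra. nra.
Qed.

Lemma rotation_number_shape_lt_2 (b x : R) :
  0 <= b -> 0 < x -> b < 15 * x ^ 2 ->
  rotation_number (/ 2 * (1 - x / sqrt (x ^ 2 + b))) < 2.
Proof.
  intros hb hx hbx.
  assert (hD : 0 < x ^ 2 + b) by nra.
  assert (hsq : sqrt (x ^ 2 + b) * sqrt (x ^ 2 + b) = x ^ 2 + b)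
    by (apply sqrt_sqrt; lra).
  assert (hsqrt_pos : 0 < sqrt (x ^ 2 + b)) by now apply sqrt_lt_R0.
  assert (hratio_le1 : x / sqrt (x ^ 2 + b) <= 1).
  { apply (Rmult_le_reg_r _ _ _ hsqrt_pos). unfold Rdiv.
    rewrite Rmult_assoc, Rinv_l by lra. nra. }
  assert (hratio_gt : / 4 < x / sqrt (x ^ 2 + b)).
  { apply (Rmult_lt_reg_r _ _ _ hsqrt_pos). unfold Rdiv.
    rewrite Rmult_assoc, Rinv_l by lra. nra. }
  apply rotation_number_lt_2; lra.
Qed.

Lemma kE2_shape (mu c : R) :
  kE2 mu c = / 2 * (1 - (1 - 2 * mu - c)
                          / sqrt ((1 - 2 * mu - c) ^ 2 + 4 * mu * (1 - mu))).
Proof. unfold kE2. do 3 f_equal. f_equal. ring. Qed.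

Lemma kM2_shape (mu c : R) :
  kM2 mu c = / 2 * (1 - (2 * mu - 1 - c)
                          / sqrt ((2 * mu - 1 - c) ^ 2 + 4 * mu * (1 - mu))).
Proof.
  unfold kM2. replace (c ^ 2 + 2 * (1 - 2 * mu) * c + 1)
    with ((2 * mu - 1 - c) ^ 2 + 4 * mu * (1 - mu)) by ring.
  unfold Rdiv. ring.
Qed.

Theorem mainTheorem10 (mu : R) (hmu0 : 0 < mu) (hmu1 : mu <= / 2) (c : R)
  (hc : c < cJ mu) :
  RE_ext mu c < 2 /\ RM_ext mu c < 2.
Proof.
  unfold cJ in hc.
  set (s := sqrt (mu * (1 - mu))) in hc.
  assert (hs0 : 0 <= s) by apply sqrt_pos.
  assert (hs2 : s * s = mu * (1 - mu)) by (apply sqrt_sqrt; nra).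
  change (rotation_number (kE2 mu c) < 2 /\ rotation_number (kM2 mu c) < 2).
  rewrite kE2_shape, kM2_shape.
  split; apply rotation_number_shape_lt_2; nra.
Qed.
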